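(* Let $(\mathfrak g,[\cdot,\cdot],[\![\cdot,\cdot,\cdot]\!])$ be a Lie-Yamaguti algebra. Then there exists a compatible pre-Lie-Yamaguti algebra structure on $\mathfrak g$ if and only if there exists an invertible relative Rota-Baxter operator $T:V\to\mathfrak g$ on $\mathfrak g$ with respect to some representation $(V;\rho,\mu)$ of $\mathfrak g$.
   Context: All vector spaces are over a field of characteristic $0$. A Lie-Yamaguti algebra is a vector space $\mathfrak g$ with a bilinear skew-symmetric $[\cdot,\cdot]$ and a trilinear $[\![\cdot,\cdot,\cdot]\!]$ skew-symmetric in its first two arguments such that for all $x,y,z,w,t$: (1) $[[x,y],z]+[[y,z],x]+[[z,x],y]+[\![x,y,z]\!]+[\![y,z,x]\!]+[\![z,x,y]\!]=0$; (2) $[\![[x,y],z,w]\!]+[\![[y,z],x,w]\!]+[\![[z,x],y,w]\!]=0$; (3) $[\![x,y,[z,w]]\!]=[[\![x,y,z]\!],w]+[z,[\![x,y,w]\!]]$; (4) $[\![x,y,[\![z,w,t]\!]]\!]=[\![[\![x,y,z]\!],w,t]\!]+[\![z,[\![x,y,w]\!],t]\!]+[\![z,w,[\![x,y,t]\!]]\!]$. A representation $(V;\rho,\mu)$ of $\mathfrak g$ is a linear $\rho:\mathfrak g\to\mathfrak{gl}(V)$ and bilinear $\mu:\otimes^2\mathfrak g\to\mathfrak{gl}(V)$ such that, with $D_{\rho,\mu}(x,y):=\mu(y,x)-\mu(x,y)+[\rho(x),\rho(y)]-\rho([x,y])$: $\mu([x,y],z)-\mu(x,z)\rho(y)+\mu(y,z)\rho(x)=0$;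 $\mu(x,[y,z])-\rho(y)\mu(x,z)+\rho(z)\mu(x,y)=0$; $\rho([\![x,y,z]\!])=[D_{\rho,\mu}(x,y),\rho(z)]$; $\mu(z,w)\mu(x,y)-\mu(y,w)\mu(x,z)-\mu(x,[\![y,z,w]\!])+D_{\rho,\mu}(y,z)\mu(x,w)=0$; $\mu([\![x,y,z]\!],w)+\mu(z,[\![x,y,w]\!])=[D_{\rho,\mu}(x,y),\mu(z,w)]$. A relative Rota-Baxter operator on $\mathfrak g$ with respect to $(V;\rho,\mu)$ is a linear map $T:V\to\mathfrak g$ with $[Tu,Tv]=T(\rho(Tu)v-\rho(Tv)u)$ and $[\![Tu,Tv,Tw]\!]=T(D_{\rho,\mu}(Tu,Tv)w+\mu(Tv,Tw)u-\mu(Tu,Tw)v)$ for all $u,v,w\in V$. A pre-Lie-Yamaguti algebra is a vector space $A$ with a bilinear operation $*$ and a trilinear operation $\{\cdot,\cdot,\cdot\}$ such that, writing $[x,y]_C=x*y-y*x$, $(x,y,z)=(x*y)*z-x*(y*z)$ and $\{x,y,z\}_D=\{z,y,x\}-\{z,x,y\}+(y,x,z)-(x,y,z)$, for all $x,y,z,w,t\in A$: (P1) $\{z,[x,y]_C,w\}-\{y*z,x,w\}+\{x*z,y,w\}=0$; (P2) $\{x,y,[z,w]_C\}=z*\{x,y,w\}-w*\{x,y,z\}$; (P3) $\{\{x,y,z\},w,t\}-\{\{x,y,w\},z,t\}-\{x,y,\{z,w,t\}_D\}-\{x,y,\{z,w,t\}\}+\{x,y,\{w,z,t\}\}+\{z,w,\{x,y,t\}\}_D=0$;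 (P4) $\{z,\{x,y,w\}_D,t\}+\{z,\{x,y,w\},t\}-\{z,\{y,x,w\},t\}+\{z,w,\{x,y,t\}_D\}+\{z,w,\{x,y,t\}\}-\{z,w,\{y,x,t\}\}=\{x,y,\{z,w,t\}\}_D-\{\{x,y,z\}_D,w,t\}$; (P5) $\{x,y,z\}_D*w+\{x,y,z\}*w-\{y,x,z\}*w=\{x,y,z*w\}_D-z*\{x,y,w\}_D$. A compatible pre-Lie-Yamaguti algebra structure on the Lie-Yamaguti algebra $\mathfrak g$ is a pre-Lie-Yamaguti algebra structure $( *,\{\cdot,\cdot,\cdot\})$ on the vector space $\mathfrak g$ such that $[x,y]=x*y-y*x$ and $[\![x,y,z]\!]=\{x,y,z\}_D+\{x,y,z\}-\{y,x,z\}$ for all $x,y,z\in\mathfrak g$. *)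

From HB Require Import structures.
From mathcomp Require Import all_boot all_order all_algebra.
Set Implicit Arguments. Unset Strict Implicit. Unset Printing Implicit Defensive.
Import GRing.Theory.
Local Open Scope ring_scope.

Section Defs.
Variable K : fieldType.

Definition is_linear (U W : lmodType K) (f : U -> W) : Prop :=
  forall (a : K) (x y : U), f (a *: x + y) = a *: f x + f y.

Definition is_bilinear (U1 U2 W : lmodType K) (f : U1 -> U2 -> W) : Prop :=
  (forall y, is_linear (fun x => f x y)) /\ (forall x, is_linear (f x)).

Definition is_trilinear (U1 U2 U3 W : lmodType K) (f : U1 -> U2 -> U3 -> W)
  : Prop :=
  (forall y z, is_linear (fun x => f x y z)) /\
  (forall x z, is_linear (fun y => f x y z)) /\
  (forall x y, is_linear (f x y)).

Definition LieYamaguti (g : lmodType K) (br : g -> g -> g)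
  (tr : g -> g -> g -> g) : Prop :=
  [/\ is_bilinear br, is_trilinear tr,
      (forall x y, br x y = - br y x),
      (forall x y z, tr x y z = - tr y x z) &
  [/\ (forall x y z,
        br (br x y) z + br (br y z) x + br (br z x) y
        + tr x y z + tr y z x + tr z x y = 0),
      (forall x y z w,
        tr (br x y) z w + tr (br y z) x w + tr (br z x) y w = 0),
      (forall x y z w,
        tr x y (br z w) = br (tr x y z) w + br z (tr x y w)) &
      (forall x y z w t,
        tr x y (tr z w t)
        = tr (tr x y z) w t + tr z (tr x y w) t + tr z w (tr x y t))]].

(* rho : g -> gl(V), mu : g (x) g -> gl(V); endomorphisms are functions
   V -> V, required to be linear; equalities in gl(V) are stated pointwise. *)
Definition Drm (g V : lmodType K) (br : g -> g -> g) (rho : g -> V -> V)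
  (mu : g -> g -> V -> V) (x y : g) (v : V) : V :=
  mu y x v - mu x y v + rho x (rho y v) - rho y (rho x v) - rho (br x y) v.

Definition LYrep (g V : lmodType K) (br : g -> g -> g)
  (tr : g -> g -> g -> g) (rho : g -> V -> V) (mu : g -> g -> V -> V) : Prop :=
  let D := Drm br rho mu in
  [/\ (forall x, is_linear (rho x)),
      (forall v, is_linear (fun x => rho x v)),
      (forall x y, is_linear (mu x y)),
      (forall v, is_bilinear (fun x y => mu x y v)) &
  [/\ (forall x y z v,
        mu (br x y) z v - mu x z (rho y v) + mu y z (rho x v) = 0),
      (forall x y z v,
        mu x (br y z) v - rho y (mu x z v) + rho z (mu x y v) = 0),
      (forall x y z v,
        rho (tr x y z) v = D x y (rho z v) - rho z (D x y v)),
      (forall x y z w v,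
        mu z w (mu x y v) - mu y w (mu x z v) - mu x (tr y z w) v
        + D y z (mu x w v) = 0) &
      (forall x y z w v,
        mu (tr x y z) w v + mu z (tr x y w) v
        = D x y (mu z w v) - mu z w (D x y v))]].

Definition relRB (g V : lmodType K) (br : g -> g -> g)
  (tr : g -> g -> g -> g) (rho : g -> V -> V) (mu : g -> g -> V -> V)
  (T : V -> g) : Prop :=
  [/\ is_linear T,
      (forall u v, br (T u) (T v) = T (rho (T u) v - rho (T v) u)) &
      (forall u v w, tr (T u) (T v) (T w)
        = T (Drm br rho mu (T u) (T v) w + mu (T v) (T w) u
             - mu (T u) (T w) v))].

Definition assoc3 (A : lmodType K) (m : A -> A -> A) (x y z : A) : A :=
  m (m x y) z - m x (m y z).

Definition braceD (A : lmodType K) (m : A -> A -> A) (br3 : A -> A -> A -> A)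
  (x y z : A) : A :=
  br3 z y x - br3 z x y + assoc3 m y x z - assoc3 m x y z.

Definition preLY (A : lmodType K) (m : A -> A -> A)
  (b : A -> A -> A -> A) : Prop :=
  let C x y := m x y - m y x in
  let bD := braceD m b in
  [/\ is_bilinear m, is_trilinear b &
  [/\ (forall x y z w, b z (C x y) w - b (m y z) x w + b (m x z) y w = 0),
      (forall x y z w, b x y (C z w) = m z (b x y w) - m w (b x y z)),
      (forall x y z w t,
        b (b x y z) w t - b (b x y w) z t - b x y (bD z w t) - b x y (b z w t)
        + b x y (b w z t) + bD z w (b x y t) = 0),
      (forall x y z w t,
        b z (bD x y w) t + b z (b x y w) t - b z (b y x w) t
        + b z w (bD x y t) + b z w (b x y t) - b z w (b y x t)
        = bD x y (b z w t) - b (bD x y z) w t) &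
      (forall x y z w,
        m (bD x y z) w + m (b x y z) w - m (b y x z) w
        = bD x y (m z w) - m z (bD x y w))]].

Definition compatible_preLY (g : lmodType K) (br : g -> g -> g)
  (tr : g -> g -> g -> g) (m : g -> g -> g) (b : g -> g -> g -> g) : Prop :=
  [/\ preLY m b,
      (forall x y, br x y = m x y - m y x) &
      (forall x y z, tr x y z = braceD m b x y z + b x y z - b y x z)].

End Defs.

(* A compatible pre-Lie-Yamaguti structure x * y, {x, y, z} on g is the same
   thing as a representation (g; L, R), with L x y = x * y and
   R(x, y) z = {z, x, y}, for which the identity of g is a relative
   Rota-Baxter operator.  Once [x, y] = x * y - y * x, D_{L,R} is {.,.,.}_D,
   so the Rota-Baxter identities for the identity are the two compatibility
   conditions, and then the representation axioms are (P1), (P2), (P5), (P3),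
   (P4) with renamed variables.  Conversely, an invertible relative
   Rota-Baxter operator T : V -> g conjugates (V; rho, mu) into the
   representation (g; T rho T^-1, T mu T^-1), for which the identity is a
   relative Rota-Baxter operator. *)

From HB Require Import structures.
From mathcomp Require Import all_boot all_order all_algebra.
Set Implicit Arguments. Unset Strict Implicit. Unset Printing Implicit Defensive.
Import GRing.Theory.
Local Open Scope ring_scope.

(* Reflexive normalisation behind [abel], which proves an equation between
   sums of atoms and opposites of atoms in a zmodType by comparing the integer
   coefficient of every atom on both sides. *)
Inductive zexpr := ZAtom of nat | ZZero | ZAdd of zexpr & zexpr | ZOpp of zexpr.

Fixpoint zeval (V : zmodType) (env : seq V) (e : zexpr) : V :=
  match e with
  | ZAtom n => nth 0 env n
  | ZZero => 0
  | ZAdd e1 e2 => zeval env e1 + zeval env e2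
  | ZOpp e1 => - zeval env e1
  end.

Fixpoint zcoef (e : zexpr) (n : nat) : int :=
  match e with
  | ZAtom k => (k == n)%:Z
  | ZZero => 0
  | ZAdd e1 e2 => zcoef e1 n + zcoef e2 n
  | ZOpp e1 => - zcoef e1 n
  end.

Lemma zeval_sum (V : zmodType) (env : seq V) (e : zexpr) :
  zeval env e = \sum_(i < size env) nth 0 env i *~ zcoef e i.
Proof.
elim: e => [n||e1 IH1 e2 IH2|e1 IH1] /=.
- have [ltn|len] := ltnP n (size env).
    rewrite (bigD1 (Ordinal ltn)) //= eqxx mulr1z big1 ?addr0 // => i ni.
    by rewrite (_ : (n == i) = false) ?mulr0z //; apply: contraNF ni => /eqP ni;
       apply/eqP/val_inj.
  rewrite nth_default // big1 // => i _.
  by rewrite (_ : (n == i) = false) ?mulr0z //; apply/negbTE;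
     rewrite neq_ltn (leq_trans (ltn_ord i) len) orbT.
- by rewrite big1 // => i _; rewrite mulr0z.
- by rewrite IH1 IH2 -big_split; apply: eq_bigr => i _; rewrite mulrzDr.
- by rewrite IH1 -sumrN; apply: eq_bigr => i _; rewrite mulrNz.
Qed.

Lemma zeval_eq (V : zmodType) (env : seq V) (e1 e2 : zexpr) :
  all (fun i => zcoef e1 i == zcoef e2 i) (iota 0 (size env)) ->
  zeval env e1 = zeval env e2.
Proof.
move=> /allP same; rewrite !zeval_sum; apply: eq_bigr => i _.
by rewrite (eqP (same i _)) // mem_iota leq0n add0n ltn_ord.
Qed.

Ltac zatoms env t :=
  lazymatch t with
  | (?a + ?b)%R => let env' := zatoms env a in zatoms env' b
  | (- ?a)%R => zatoms env a
  | 0%R => env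
  | _ => constr:(t :: env)
  end.

Ltac zindex x env :=
  lazymatch env with
  | x :: _ => constr:(0%N)
  | _ :: ?env' => let n := zindex x env' in constr:(n.+1)
  end.

Ltac zreify env t :=
  lazymatch t with
  | (?a + ?b)%R => let ea := zreify env a in let eb := zreify env b in
                   constr:(ZAdd ea eb)
  | (- ?a)%R => let ea := zreify env a in constr:(ZOpp ea)
  | 0%R => constr:(ZZero)
  | _ => let n := zindex t env in constr:(ZAtom n)
  end.

Ltac abel :=
  lazymatch goal with |- @eq ?V ?l ?r =>
    let envl := zatoms (@nil V) l in let env := zatoms envl r in
    let el := zreify env l in let er := zreify env r in
    change (zeval env el = zeval env er); apply: zeval_eq; exact: erefl
  end.

Lemma eq_of_subr_eq (V : zmodType) (a b c d : V) :
  a = b -> c - d = a - b -> c = d.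
Proof. by move=> ->; rewrite subrr => /eqP; rewrite subr_eq0 => /eqP. Qed.

Ltac abel_from H :=
  first [ apply: (eq_of_subr_eq H); abel
        | apply: (eq_of_subr_eq (esym H)); abel ].

Section Linear.
Variables (K : fieldType) (U W : lmodType K) (f : U -> W).
Hypothesis lf : is_linear f.

Lemma linD x y : f (x + y) = f x + f y.
Proof. by have := lf 1 x y; rewrite !scale1r. Qed.

Lemma lin0 : f 0 = 0.
Proof. by apply: (addrI (f 0)); rewrite -linD !addr0. Qed.

Lemma linN x : f (- x) = - f x.
Proof. by have := lf (-1) x 0; rewrite !addr0 lin0 addr0 !scaleN1r. Qed.

Lemma lin_can (h : W -> U) : cancel f h -> cancel h f -> is_linear h.
Proof. by move=> fK hK a x y; apply: (can_inj fK); rewrite lf !hK. Qed.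

End Linear.

Lemma lin_comp (K : fieldType) (U V W : lmodType K) (f : V -> W) (h : U -> V) :
  is_linear f -> is_linear h -> is_linear (fun x => f (h x)).
Proof. by move=> lf lh a x y; rewrite lh lf. Qed.

Section Bilinear.
Variables (K : fieldType) (U1 U2 W : lmodType K) (f : U1 -> U2 -> W).
Hypothesis bf : is_bilinear f.

Lemma bilinDl x y z : f (x + y) z = f x z + f y z.
Proof. exact: (linD (bf.1 z)). Qed.
Lemma bilinNl x z : f (- x) z = - f x z.
Proof. exact: (linN (bf.1 z)). Qed.
Lemma bilinDr x y z : f x (y + z) = f x y + f x z.
Proof. exact: (linD (bf.2 x)). Qed.
Lemma bilinNr x z : f x (- z) = - f x z.
Proof. exact: (linN (bf.2 x)). Qed.

End Bilinear.

Section Trilinear.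
Variables (K : fieldType) (U1 U2 U3 W : lmodType K) (f : U1 -> U2 -> U3 -> W).
Hypothesis tf : is_trilinear f.

Lemma trilinD1 x x' y z : f (x + x') y z = f x y z + f x' y z.
Proof. by have [l1 _] := tf; exact: (linD (l1 y z)). Qed.
Lemma trilinN1 x y z : f (- x) y z = - f x y z.
Proof. by have [l1 _] := tf; exact: (linN (l1 y z)). Qed.
Lemma trilinD2 x y y' z : f x (y + y') z = f x y z + f x y' z.
Proof. by have [_ [l2 _]] := tf; exact: (linD (l2 x z)). Qed.
Lemma trilinN2 x y z : f x (- y) z = - f x y z.
Proof. by have [_ [l2 _]] := tf; exact: (linN (l2 x z)). Qed.
Lemma trilinD3 x y z z' : f x y (z + z') = f x y z + f x y z'.
Proof. by have [_ [_ l3]] := tf; exact: (linD (l3 x y)). Qed.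
Lemma trilinN3 x y z : f x y (- z) = - f x y z.
Proof. by have [_ [_ l3]] := tf; exact: (linN (l3 x y)). Qed.

End Trilinear.

Definition brace_right (K : fieldType) (g : lmodType K) (b : g -> g -> g -> g)
  (x y z : g) : g := b z x y.

Section RegularRepresentation.
Variables (K : fieldType) (g : lmodType K) (br : g -> g -> g)
  (tr : g -> g -> g -> g) (m : g -> g -> g) (b : g -> g -> g -> g).
Hypotheses (hm : is_bilinear m) (hb : is_trilinear b).

Let multilinE := (bilinDl hm, bilinNl hm, bilinDr hm, bilinNr hm,
  trilinD1 hb, trilinN1 hb, trilinD2 hb, trilinN2 hb, trilinD3 hb, trilinN3 hb).

Lemma Drm_regular : (forall x y, br x y = m x y - m y x) ->
  forall x y v, Drm br m (brace_right b) x y v = braceD m b x y v.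
Proof.
move=> hbr x y v.
by rewrite /Drm /braceD /assoc3 /brace_right hbr !multilinE; abel.
Qed.

Lemma relRB_id_regular : relRB br tr m (brace_right b) id <->
  (forall x y, br x y = m x y - m y x) /\
  (forall x y z, tr x y z = braceD m b x y z + b x y z - b y x z).
Proof.
by split=> [[_ hbr htr] | [hbr htr]]; split=> // x y z; rewrite htr Drm_regular.
Qed.

Lemma LYrep_regular_iff : (forall x y, br x y = m x y - m y x) ->
  (forall x y z, tr x y z = braceD m b x y z + b x y z - b y x z) ->
  LYrep br tr m (brace_right b) <-> preLY m b.
Proof.
move=> hbr htr; have [hb1 [hb2 hb3]] := hb.
rewrite /LYrep /preLY /=.
split=> [[_ _ _ _ [A1 A2 A3 A4 A5]] | [_ _ [P1 P2 P3 P4 P5]]].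
- split=> //; split=> [x y z w | x y z w | x y z w t | x y z w t | x y z w].
  + move: (A1 x y w z); rewrite /brace_right hbr => H; abel_from H.
  + move: (A2 y z w x); rewrite /brace_right hbr => H; abel_from H.
  + move: (A4 y z w t x); rewrite !Drm_regular //
    /brace_right htr !multilinE => H; abel_from H.
  + move: (A5 x y w t z); rewrite !Drm_regular //
    /brace_right !htr !multilinE => H; abel_from H.
  + move: (A3 x y z w); rewrite !Drm_regular //
    /brace_right htr !multilinE => H; abel_from H.
- split=> [| | | v | ]; [exact: hm.2 | exact: hm.1 | exact: hb1 | | ].
    by split=> [y | x]; [exact: hb2 | exact: hb3].
  split=> [x y z v | x y z v | x y z v | x y z w v | x y z w v].
  + move: (P1 x y v z); rewrite /brace_right hbr => H; abel_from H.
  + move: (P2 v x y z); rewrite /brace_right hbr => H; abel_from H.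
  + move: (P5 x y z v); rewrite !Drm_regular //
    /brace_right htr !multilinE => H; abel_from H.
  + move: (P3 v x y z w); rewrite !Drm_regular //
    /brace_right htr !multilinE => H; abel_from H.
  + move: (P4 x y v z w); rewrite !Drm_regular //
    /brace_right !htr !multilinE => H; abel_from H.
Qed.

End RegularRepresentation.

Lemma compatible_preLY_iff_regular (K : fieldType) (g : lmodType K)
    (br : g -> g -> g) (tr : g -> g -> g -> g) (m : g -> g -> g)
    (b : g -> g -> g -> g) :
  compatible_preLY br tr m b <->
  LYrep br tr m (brace_right b) /\ relRB br tr m (brace_right b) id.
Proof.
split=> [[pre hbr htr] | [rep rb]].
- have [hm hb _] := pre.
  by split; [apply/(LYrep_regular_iff hm hb hbr htr) | apply/relRB_id_regular].
- have [hm1 hm2 hb1 hb23 _] := rep.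
  have hm : is_bilinear m by split.
  have hb : is_trilinear b.
    by split=> [// | ]; split=> [x z | x y];
      [exact: (hb23 x).1 | exact: (hb23 x).2].
  have [hbr htr] := (relRB_id_regular _ _ _ hm).1 rb.
  by split=> //; apply/(LYrep_regular_iff hm hb hbr htr).
Qed.

Section Transport.
Variables (K : fieldType) (g V : lmodType K) (T : V -> g) (S : g -> V)
  (br : g -> g -> g) (tr : g -> g -> g -> g)
  (rho : g -> V -> V) (mu : g -> g -> V -> V).
Hypotheses (hT : is_linear T) (TK : cancel T S) (SK : cancel S T).

Definition transport_rho (x u : g) : g := T (rho x (S u)).
Definition transport_mu (x y u : g) : g := T (mu x y (S u)).

Let linTE := (linD hT, linN hT).

Lemma Drm_transport x y u :
  Drm br transport_rho transport_mu x y u = T (Drm br rho mu x y (S u)).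
Proof. by rewrite /Drm /transport_rho /transport_mu !TK !linTE. Qed.

Lemma LYrep_transport :
  LYrep br tr rho mu -> LYrep br tr transport_rho transport_mu.
Proof.
have hS := lin_can hT TK SK.
move=> [hr1 hr2 hmu1 hmu2 [A1 A2 A3 A4 A5]].
split=> [x | u | x y | u | ].
- exact: lin_comp hT (lin_comp (hr1 x) hS).
- exact: lin_comp hT (hr2 (S u)).
- exact: lin_comp hT (lin_comp (hmu1 x y) hS).
- by split=> [y | x]; apply: lin_comp hT _;
    [exact: (hmu2 (S u)).1 | exact: (hmu2 (S u)).2].
split=> [x y z u | x y z u | x y z u | x y z w u | x y z w u];
  rewrite ?Drm_transport /transport_rho /transport_mu !TK.
- by move: (congr1 T (A1 x y z (S u))); rewrite (lin0 hT) !linTE.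
- by move: (congr1 T (A2 x y z (S u))); rewrite (lin0 hT) !linTE.
- by move: (congr1 T (A3 x y z (S u))); rewrite !linTE.
- by move: (congr1 T (A4 x y z w (S u))); rewrite (lin0 hT) !linTE.
- by move: (congr1 T (A5 x y z w (S u))); rewrite !linTE.
Qed.

Lemma relRB_transport :
  relRB br tr rho mu T -> relRB br tr transport_rho transport_mu id.
Proof.
move=> [_ RB2 RB3]; split=> [a u v | x y | x y z] //.
- by rewrite -{1}(SK x) -{1}(SK y) RB2 !SK !linTE.
- by rewrite -{1}(SK x) -{1}(SK y) -{1}(SK z) RB3 !SK Drm_transport !linTE.
Qed.

End Transport.

Theorem proposition3p15 (K : fieldType) (char0 : [pchar K] =i pred0)
  (g : lmodType K) (br : g -> g -> g) (tr : g -> g -> g -> g) :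
  LieYamaguti br tr ->
  ((exists (m : g -> g -> g) (b : g -> g -> g -> g), compatible_preLY br tr m b)
   <->
   (exists (V : lmodType K) (rho : g -> V -> V) (mu : g -> g -> V -> V)
           (T : V -> g),
      LYrep br tr rho mu /\ relRB br tr rho mu T /\ bijective T)).
Proof.
move=> _; split.
- move=> [m [b /compatible_preLY_iff_regular [rep rb]]].
  by exists g, m, (brace_right b), id; do 2!split=> //; exists id.
- move=> [V [rho [mu [T [rep [rb [S TK SK]]]]]]].
  have [hT _ _] := rb.
  exists (transport_rho T S rho), (fun x y u => transport_mu T S mu y u x).
  apply/compatible_preLY_iff_regular; split.
  + exact: LYrep_transport.
  + exact: relRB_transport.
Qed.
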